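(* Let $\pi_i:(X_i,T_i)\to(Y_i,S_i)$, $i=1,2$, be factor maps between topological dynamical systems. If both $\pi_1$ and $\pi_2$ are proximal, then the product map $\pi_1\times\pi_2:(X_1\times X_2,T_1\times T_2)\to(Y_1\times Y_2,S_1\times S_2)$ is proximal.
   Context: Systems: compact metric space with continuous surjection; factor map: continuous surjection intertwining the maps. A pair $x,y$ is proximal if $\liminf_{n\to\infty}\varrho(T^nx,T^ny)=0$. A factor map $\pi$ is proximal if every pair $x_1,x_2$ with $\pi(x_1)=\pi(x_2)$ is proximal. *)

From Stdlib Require Import Reals Lra.
Open Scope R_scope.

Record MetricSpace := {
  carrier :> Type;
  dist : carrier -> carrier -> R;
  dist_nonneg : forall x y, 0 <= dist x y;
  dist_sym : forall x y, dist x y = dist y x;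
  dist_refl : forall x, dist x x = 0;
  dist_eq : forall x y, dist x y = 0 -> x = y;
  dist_tri : forall x y z, dist x z <= dist x y + dist y z
}.
Arguments dist {m} _ _.

Definition compact (X : MetricSpace) : Prop :=
  forall u : nat -> X, exists (phi : nat -> nat) (l : X),
    (forall n, (phi n < phi (S n))%nat) /\
    (forall eps, 0 < eps -> exists N, forall n, (N <= n)%nat ->
        dist (u (phi n)) l < eps).

Definition continuous {X Y : MetricSpace} (f : X -> Y) : Prop :=
  forall x eps, 0 < eps -> exists delta, 0 < delta /\
    forall y, dist x y < delta -> dist (f x) (f y) < eps.

Definition surjective {A B : Type} (f : A -> B) : Prop :=
  forall b, exists a, f a = b.

Definition tds (X : MetricSpace) (T : X -> X) : Prop :=
  compact X /\ continuous T /\ surjective T.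

Definition factor_map (X : MetricSpace) (T : X -> X) (Y : MetricSpace) (S : Y -> Y)
  (pi : X -> Y) : Prop :=
  continuous pi /\ surjective pi /\ (forall x, pi (T x) = S (pi x)).

(** liminf_{n->oo} dist(T^n x, T^n y) = 0, written out (distances are >= 0). *)
Definition proximal_pair (X : MetricSpace) (T : X -> X) (x y : X) : Prop :=
  forall eps, 0 < eps -> forall N : nat, exists n : nat,
    (N <= n)%nat /\ dist (Nat.iter n T x) (Nat.iter n T y) < eps.

Definition proximal_factor (X : MetricSpace) (T : X -> X) (Y : MetricSpace) (S : Y -> Y)
  (pi : X -> Y) : Prop :=
  factor_map X T Y S pi /\
  (forall x1 x2, pi x1 = pi x2 -> proximal_pair X T x1 x2).

Section Prod.
Variables X Y : MetricSpace.
Definition prod_dist (p q : X * Y) : R :=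
  Rmax (dist (fst p) (fst q)) (dist (snd p) (snd q)).

Lemma prod_dist_nonneg p q : 0 <= prod_dist p q.
Proof. unfold prod_dist. eapply Rle_trans; [apply dist_nonneg|apply Rmax_l]. Qed.
Lemma prod_dist_sym p q : prod_dist p q = prod_dist q p.
Proof. unfold prod_dist. now rewrite (dist_sym _ (fst p)), (dist_sym _ (snd p)). Qed.
Lemma prod_dist_refl p : prod_dist p p = 0.
Proof. unfold prod_dist. rewrite !dist_refl. apply Rmax_left; lra. Qed.
Lemma prod_dist_eq p q : prod_dist p q = 0 -> p = q.
Proof.
  destruct p as [a b], q as [c d]; unfold prod_dist; simpl; intro H.
  pose proof (Rmax_l (dist a c) (dist b d)); pose proof (Rmax_r (dist a c) (dist b d)).
  pose proof (dist_nonneg _ a c); pose proof (dist_nonneg _ b d).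
  rewrite (dist_eq _ a c), (dist_eq _ b d); auto; lra.
Qed.
Lemma prod_dist_tri p q r : prod_dist p r <= prod_dist p q + prod_dist q r.
Proof.
  unfold prod_dist. apply Rmax_lub.
  - eapply Rle_trans; [apply dist_tri with (y := fst q)|].
    apply Rplus_le_compat; apply Rmax_l.
  - eapply Rle_trans; [apply dist_tri with (y := snd q)|].
    apply Rplus_le_compat; apply Rmax_r.
Qed.

Definition prod_ms : MetricSpace :=
  {| carrier := X * Y; dist := prod_dist;
     dist_nonneg := prod_dist_nonneg; dist_sym := prod_dist_sym;
     dist_refl := prod_dist_refl; dist_eq := prod_dist_eq;
     dist_tri := prod_dist_tri |}.
End Prod.

Definition prod_map {A B C D : Type} (f : A -> C) (g : B -> D) (p : A * B) : C * D :=
  (f (fst p), g (snd p)).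

(* Let (x1,x2), (x1',x2') lie in one fibre of pi1 x pi2. Since x1, x1' are proximal, there are times
   n_k with d(T1^(n_k) x1, T1^(n_k) x1') -> 0; by compactness we may assume that
   (T1 x T2)^(n_k) sends both points to limits (z1,z2) and (z1,z2'), with the same first coordinate.
   Continuity of pi2 puts z2, z2' in one fibre of pi2, so they are proximal, and hence so are
   (z1,z2) and (z1,z2'). Proximality of the limits pulls back to the original pair: if T^m brings
   the limits eps-close, then T^(m + n_k) brings the original points close for k large. *)

From Stdlib Require Import Reals Lra Lia ClassicalEpsilon.
Open Scope R_scope.

Definition converges {X : MetricSpace} (u : nat -> X) (l : X) : Prop :=
  forall eps, 0 < eps -> exists N, forall n, (N <= n)%nat -> dist (u n) l < eps.

Definition dist_vanishes {X : MetricSpace} (u v : nat -> X) : Prop :=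
  forall eps, 0 < eps -> exists N, forall n, (N <= n)%nat -> dist (u n) (v n) < eps.

Definition strictly_increasing (phi : nat -> nat) : Prop :=
  forall n, (phi n < phi (S n))%nat.

Lemma strictly_increasing_lt phi :
  strictly_increasing phi -> forall m n, (m < n)%nat -> (phi m < phi n)%nat.
Proof.
  intros Hphi m n Hmn; induction Hmn as [|n _ IH].
  - apply Hphi.
  - specialize (Hphi n); lia.
Qed.

Lemma strictly_increasing_ge phi : strictly_increasing phi -> forall n, (n <= phi n)%nat.
Proof. intros Hphi n; induction n as [|n IH]; [lia|]. specialize (Hphi n); lia. Qed.

Lemma strictly_increasing_comp phi psi :
  strictly_increasing phi -> strictly_increasing psi ->
  strictly_increasing (fun n => phi (psi n)).
Proof. intros Hphi Hpsi n. apply strictly_increasing_lt; auto. Qed.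

Section Sequences.
Variable X : MetricSpace.
Implicit Types (u v : nat -> X) (l : X).

Lemma converges_ext u v l : (forall n, u n = v n) -> converges u l -> converges v l.
Proof.
  intros Huv Hu eps He. destruct (Hu eps He) as [N HN].
  exists N; intros n Hn. rewrite <- Huv. auto.
Qed.

Lemma converges_subseq u l phi :
  strictly_increasing phi -> converges u l -> converges (fun n => u (phi n)) l.
Proof.
  intros Hphi Hu eps He. destruct (Hu eps He) as [N HN].
  exists N; intros n Hn. apply HN. pose proof (strictly_increasing_ge phi Hphi n); lia.
Qed.

Lemma dist_vanishes_subseq u v phi :
  strictly_increasing phi -> dist_vanishes u v ->
  dist_vanishes (fun n => u (phi n)) (fun n => v (phi n)).
Proof.
  intros Hphi Huv eps He. destruct (Huv eps He) as [N HN].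
  exists N; intros n Hn. apply HN. pose proof (strictly_increasing_ge phi Hphi n); lia.
Qed.

Lemma converges_unique u l l' : converges u l -> converges u l' -> l = l'.
Proof.
  intros Hl Hl'. apply dist_eq.
  destruct (Rle_lt_or_eq_dec 0 (dist l l') (dist_nonneg _ l l')) as [Hpos|]; auto.
  destruct (Hl (dist l l' / 2)) as [N HN]; [lra|].
  destruct (Hl' (dist l l' / 2)) as [N' HN']; [lra|].
  specialize (HN (N + N')%nat ltac:(lia)). specialize (HN' (N + N')%nat ltac:(lia)).
  pose proof (dist_tri _ l (u (N + N')%nat) l').
  rewrite dist_sym in HN. lra.
Qed.

Lemma converges_dist_vanishes u v l : converges u l -> dist_vanishes u v -> converges v l.
Proof.
  intros Hu Huv eps He.
  destruct (Hu (eps / 2)) as [N HN]; [lra|]. destruct (Huv (eps / 2)) as [N' HN']; [lra|].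
  exists (N + N')%nat; intros n Hn.
  specialize (HN n ltac:(lia)). specialize (HN' n ltac:(lia)).
  pose proof (dist_tri _ (v n) (u n) l). rewrite dist_sym in HN'. lra.
Qed.

End Sequences.

Lemma converges_continuous {X Y : MetricSpace} (f : X -> Y) u l :
  continuous f -> converges u l -> converges (fun n => f (u n)) (f l).
Proof.
  intros Hf Hu eps He. destruct (Hf l eps He) as [delta [Hdelta Hl]].
  destruct (Hu delta Hdelta) as [N HN]. exists N; intros n Hn.
  rewrite dist_sym. apply Hl. rewrite dist_sym. auto.
Qed.

Lemma iter_continuous (X : MetricSpace) (f : X -> X) m :
  continuous f -> continuous (Nat.iter m f).
Proof.
  intro Hf. induction m as [|m IH]; intros x eps He.
  - exists eps; split; auto.
  - destruct (Hf (Nat.iter m f x) eps He) as [d1 [Hd1 H1]].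
    destruct (IH x d1 Hd1) as [d2 [Hd2 H2]].
    exists d2; split; auto. intros y Hy. apply H1, H2, Hy.
Qed.

Lemma iter_semiconj {A B : Type} (T : A -> A) (S : B -> B) (pi : A -> B) :
  (forall x, pi (T x) = S (pi x)) -> forall n x, pi (Nat.iter n T x) = Nat.iter n S (pi x).
Proof. intros H n x; induction n as [|n IH]; simpl; auto. rewrite H, IH; auto. Qed.

Lemma iter_prod_map {A B : Type} (f : A -> A) (g : B -> B) n p :
  Nat.iter n (prod_map f g) p = (Nat.iter n f (fst p), Nat.iter n g (snd p)).
Proof. induction n as [|n IH]; simpl; [now destruct p|]. now rewrite IH. Qed.

Section Products.
Variables X Y : MetricSpace.

Lemma converges_prod_iff (u : nat -> prod_ms X Y) (a : X) (b : Y) :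
  converges u (a, b) <->
  converges (fun n => fst (u n)) a /\ converges (fun n => snd (u n)) b.
Proof.
  split.
  - intros Hu; split; intros eps He; destruct (Hu eps He) as [N HN];
      exists N; intros n Hn; specialize (HN n Hn); simpl in HN; unfold prod_dist in HN;
      simpl in HN; eapply Rle_lt_trans; eauto; [apply Rmax_l | apply Rmax_r].
  - intros [Ha Hb] eps He.
    destruct (Ha eps He) as [N HN]. destruct (Hb eps He) as [N' HN'].
    exists (N + N')%nat; intros n Hn. simpl; unfold prod_dist; simpl.
    apply Rmax_lub_lt; [apply HN | apply HN']; lia.
Qed.

Lemma compact_prod : compact X -> compact Y -> compact (prod_ms X Y).
Proof.
  intros HX HY u.
  destruct (HX (fun n => fst (u n))) as [phi1 [a [Hphi1 Ha]]].
  destruct (HY (fun n => snd (u (phi1 n)))) as [phi2 [b [Hphi2 Hb]]].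
  exists (fun n => phi1 (phi2 n)), (a, b).
  split; [now apply strictly_increasing_comp|].
  apply converges_prod_iff; split; [|exact Hb].
  apply (converges_subseq X (fun n => fst (u (phi1 n))) a phi2 Hphi2 Ha).
Qed.

Lemma converges_iter_prod_map (f : X -> X) (g : Y -> Y) (m : nat -> nat) x y a b :
  @converges (prod_ms X Y) (fun k => Nat.iter (m k) (prod_map f g) (x, y)) (a, b) ->
  converges (fun k => Nat.iter (m k) f x) a /\ converges (fun k => Nat.iter (m k) g y) b.
Proof.
  intros Hxy. apply converges_prod_iff in Hxy as [Ha Hb].
  split; eapply converges_ext; try eassumption; intro k.
  - exact (f_equal fst (iter_prod_map f g (m k) (x, y))).
  - exact (f_equal snd (iter_prod_map f g (m k) (x, y))).
Qed.

End Products.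

Lemma continuous_prod_map (A B C D : MetricSpace) (f : A -> C) (g : B -> D) :
  continuous f -> continuous g ->
  @continuous (prod_ms A B) (prod_ms C D) (prod_map f g).
Proof.
  intros Hf Hg [a b] eps He.
  destruct (Hf a eps He) as [d1 [Hd1 H1]]. destruct (Hg b eps He) as [d2 [Hd2 H2]].
  exists (Rmin d1 d2); split; [now apply Rmin_glb_lt|].
  intros [c d] Hcd. simpl in *. unfold prod_dist in *; simpl in *.
  apply Rmax_lub_lt.
  - apply H1. eapply Rle_lt_trans; [apply Rmax_l|]. eapply Rlt_le_trans; [exact Hcd|apply Rmin_l].
  - apply H2. eapply Rle_lt_trans; [apply Rmax_r|]. eapply Rlt_le_trans; [exact Hcd|apply Rmin_r].
Qed.

Lemma factor_map_prod X1 T1 Y1 S1 pi1 X2 T2 Y2 S2 pi2 :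
  factor_map X1 T1 Y1 S1 pi1 -> factor_map X2 T2 Y2 S2 pi2 ->
  factor_map (prod_ms X1 X2) (prod_map T1 T2) (prod_ms Y1 Y2) (prod_map S1 S2)
             (prod_map pi1 pi2).
Proof.
  intros [Hc1 [Hs1 He1]] [Hc2 [Hs2 He2]]. split; [|split].
  - now apply continuous_prod_map.
  - intros [b1 b2]. destruct (Hs1 b1) as [a1 <-]. destruct (Hs2 b2) as [a2 <-].
    now exists (a1, a2).
  - intros [a1 a2]. unfold prod_map; simpl. now rewrite He1, He2.
Qed.

Lemma proximal_pair_vanishing_times X T x y :
  proximal_pair X T x y ->
  exists n : nat -> nat, dist_vanishes (fun k => Nat.iter (n k) T x) (fun k => Nat.iter (n k) T y).
Proof.
  intros Hxy.
  assert (Hpos : forall k, 0 < / (INR k + 1)).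
  { intro k. apply Rinv_0_lt_compat. pose proof (pos_INR k); lra. }
  destruct (choice (fun k n => dist (Nat.iter n T x) (Nat.iter n T y) < / (INR k + 1)))
    as [n Hn].
  { intro k. destruct (Hxy _ (Hpos k) 0%nat) as [n [_ Hd]]. eauto. }
  exists n; intros eps He.
  destruct (archimed_cor1 eps He) as [K [HK HK0]].
  exists K; intros k Hk. eapply Rlt_trans; [apply Hn|].
  eapply Rle_lt_trans; [|exact HK].
  apply Rinv_le_contravar; [apply lt_0_INR; lia|].
  pose proof (le_INR _ _ Hk); lra.
Qed.

(* No growth condition on the times n is needed: the delay m >= N given by the limits already
   makes m + n k >= N. *)
Lemma proximal_pair_of_limits X T x y (n : nat -> nat) z z' :
  continuous T ->
  converges (fun k => Nat.iter (n k) T x) z -> converges (fun k => Nat.iter (n k) T y) z' ->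
  proximal_pair X T z z' -> proximal_pair X T x y.
Proof.
  intros HT Hx Hy Hzz' eps He N.
  destruct (Hzz' (eps / 3) ltac:(lra) N) as [m [Hm Hd]].
  pose proof (iter_continuous X T m HT) as HTm.
  destruct (converges_continuous _ _ _ HTm Hx (eps / 3)) as [K HK]; [lra|].
  destruct (converges_continuous _ _ _ HTm Hy (eps / 3)) as [K' HK']; [lra|].
  specialize (HK (K + K')%nat ltac:(lia)). specialize (HK' (K + K')%nat ltac:(lia)).
  exists (m + n (K + K')%nat)%nat; split; [lia|].
  rewrite !Nat.iter_add.
  pose proof (dist_tri _ (Nat.iter m T (Nat.iter (n (K + K')%nat) T x)) (Nat.iter m T z)
                (Nat.iter m T (Nat.iter (n (K + K')%nat) T y))).
  pose proof (dist_tri _ (Nat.iter m T z) (Nat.iter m T z')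
                (Nat.iter m T (Nat.iter (n (K + K')%nat) T y))).
  rewrite (dist_sym _ (Nat.iter m T z')) in H0. lra.
Qed.

Lemma proximal_pair_prod_same_fst (X1 X2 : MetricSpace) (T1 : X1 -> X1) (T2 : X2 -> X2)
  (z1 : X1) (z2 z2' : X2) :
  proximal_pair X2 T2 z2 z2' ->
  proximal_pair (prod_ms X1 X2) (prod_map T1 T2) (z1, z2) (z1, z2').
Proof.
  intros Hz eps He N. destruct (Hz eps He N) as [n [Hn Hd]].
  exists n; split; auto. simpl. rewrite !iter_prod_map. unfold prod_dist; simpl.
  rewrite dist_refl. now apply Rmax_lub_lt.
Qed.

Section ProximalProduct.
Variables (X1 X2 Y2 : MetricSpace) (T1 : X1 -> X1) (T2 : X2 -> X2) (S2 : Y2 -> Y2)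
  (pi2 : X2 -> Y2).
Hypotheses (hK1 : compact X1) (hK2 : compact X2) (hT1 : continuous T1) (hT2 : continuous T2)
  (hpi2 : continuous pi2) (hsemi2 : forall x, pi2 (T2 x) = S2 (pi2 x))
  (hprox2 : forall x x', pi2 x = pi2 x' -> proximal_pair X2 T2 x x').

Lemma proximal_pair_prod_of_fiber (x1 x1' : X1) (x2 x2' : X2) :
  proximal_pair X1 T1 x1 x1' -> pi2 x2 = pi2 x2' ->
  proximal_pair (prod_ms X1 X2) (prod_map T1 T2) (x1, x2) (x1', x2').
Proof.
  intros Hx1 Hx2.
  destruct (proximal_pair_vanishing_times _ _ _ _ Hx1) as [n Hn].
  pose (P := prod_map T1 T2).
  pose proof (compact_prod _ _ (compact_prod _ _ hK1 hK2) (compact_prod _ _ hK1 hK2)) as HK.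
  destruct (HK (fun k => (Nat.iter (n k) P (x1, x2), Nat.iter (n k) P (x1', x2'))))
    as [phi [[[z1 z2] [z1' z2']] [Hphi Hconv]]].
  apply converges_prod_iff in Hconv as [Hp Hq]. cbn [fst snd] in Hp, Hq.
  destruct (converges_iter_prod_map _ _ _ _ _ _ _ _ _ Hp) as [Hlim1 Hlim2].
  destruct (converges_iter_prod_map _ _ _ _ _ _ _ _ _ Hq) as [Hlim1' Hlim2'].
  assert (Hz1 : z1 = z1').
  { refine (converges_unique _ _ _ _ _ Hlim1').
    exact (converges_dist_vanishes _ _ _ _ Hlim1 (dist_vanishes_subseq _ _ _ _ Hphi Hn)). }
  assert (Hz2 : pi2 z2 = pi2 z2').
  { apply (converges_unique _ _ _ _ (converges_continuous _ _ _ hpi2 Hlim2)).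
    eapply converges_ext; [|exact (converges_continuous _ _ _ hpi2 Hlim2')].
    intro k. now rewrite !(iter_semiconj T2 S2 pi2 hsemi2), Hx2. }
  subst z1'.
  apply (proximal_pair_of_limits (prod_ms X1 X2) _ _ _ (fun k => n (phi k)) (z1, z2) (z1, z2')); auto.
  - now apply continuous_prod_map.
  - now apply proximal_pair_prod_same_fst, hprox2.
Qed.

End ProximalProduct.

Theorem lemma4p3
  (X1 Y1 X2 Y2 : MetricSpace)
  (T1 : X1 -> X1) (S1 : Y1 -> Y1) (T2 : X2 -> X2) (S2 : Y2 -> Y2)
  (pi1 : X1 -> Y1) (pi2 : X2 -> Y2)
  (hX1 : tds X1 T1) (hY1 : tds Y1 S1) (hX2 : tds X2 T2) (hY2 : tds Y2 S2)
  (hp1 : proximal_factor X1 T1 Y1 S1 pi1)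
  (hp2 : proximal_factor X2 T2 Y2 S2 pi2) :
  proximal_factor (prod_ms X1 X2) (prod_map T1 T2)
                  (prod_ms Y1 Y2) (prod_map S1 S2) (prod_map pi1 pi2).
Proof.
  destruct hX1 as [HK1 [HT1 _]], hX2 as [HK2 [HT2 _]].
  destruct hp1 as [Hf1 Hprox1], hp2 as [Hf2 Hprox2].
  split; [now apply factor_map_prod|].
  intros [x1 x2] [x1' x2'] Hfib. injection Hfib as Hfib1 Hfib2.
  destruct Hf2 as [Hc2 [_ Hsemi2]].
  apply (proximal_pair_prod_of_fiber X1 X2 Y2 T1 T2 S2 pi2); auto.
Qed.
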